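(* Let $k\ge 2$ be even and $i\in\{1,\ldots,k-1\}$ such that $\binom{k}{i}$ and $\binom{k-1}{i}$ are both odd (so $i$ is even and $k-i+2\le k$). Then $\lambda_{k-i+2}-\lambda_{k-i}\equiv 2\pmod 4$.
   Context: For $0\le i\le k$ and $j=0,\ldots,k$ define $\lambda_j=\sum_{\ell=0}^{k-i}(-1)^\ell\binom{j}{\ell}\binom{k-j}{i-j+\ell}^2$, with the convention $\binom{a}{b}=0$ unless $0\le b\le a$; these are the eigenvalues of the graph $J(2k,k,i)$ on $k$-subsets of $\{1,\ldots,2k\}$ (adjacent iff intersection has size $i$). *)

From HB Require Import structures.
From mathcomp Require Import all_boot all_order all_algebra.
Set Implicit Arguments. Unset Strict Implicit. Unset Printing Implicit Defensive.
Import Order.TTheory GRing.Theory Num.Theory.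
Local Open Scope ring_scope.

Definition zbinom (a : nat) (b : int) : int :=
  match b with
  | Posz n => ('C(a, n))%:Z
  | Negz _ => 0
  end.

(* lambda_j of J(2k,k,i):
   sum_{l=0}^{k-i} (-1)^l C(j,l) C(k-j, i-j+l)^2 *)
Definition lam (k i j : nat) : int :=
  \sum_(0 <= l < (k - i).+1)
     (-1) ^+ l * ('C(j, l))%:Z * (zbinom (k - j) (i%:Z - j%:Z + l%:Z)) ^+ 2.

From HB Require Import structures.
From mathcomp Require Import all_boot all_order all_algebra.
From mathcomp Require Import zify ring.
Import Order.TTheory GRing.Theory Num.Theory.

(* Modulo 4, lambda_j is the coefficient of X^(k-i) in (1 - X)^j G_(k-j), where
   G_c = sqbin c = sum_r C(c, r)^2 X^r.  Odd squares are 1 mod 4, so G_c has the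
   parities of the C(c, r) as coefficients and 2 G_c = 2 (1 + X)^c.  Writing
   i = 2m + 2, the factor (1 - X)^2 relating the two lambdas is traded for
   1 - X^2, which maps G_(2m) to G_(2m+2) up to 2 borrow_poly m; the trade costs
   the term 2 X (1 + X)^(k-1), whose coefficient is 2 C(k-1, i) = 2.  The error
   term vanishes by Lucas' theorem: C(k, i) odd means k/2 - i/2 and i/2 share
   no binary digit. *)

Lemma odd_bin_double n r :
  odd 'C(n.*2, r.*2) = odd 'C(n, r) /\ odd 'C(n.*2, r.*2.+1) = false.
Proof.
elim: n r => [|n IHn] [|r]; rewrite ?bin0n ?bin0 ?bin1 ?odd_double //.
have [even_r odd_r] := IHn r; have [even_r1 odd_r1] := IHn r.+1.
rewrite !doubleS !binS -doubleS.
by rewrite !oddD even_r odd_r even_r1 odd_r1 /= addbF addbb.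
Qed.

Lemma odd_bin_half n r : odd 'C(n, r) = (odd r ==> odd n) && odd 'C(n./2, r./2).
Proof.
rewrite -{1}(odd_double_half n) -{1}(odd_double_half r).
have [even_r odd_r] := odd_bin_double n./2 r./2.
case: (odd n); case: (odd r); rewrite /= ?add0n ?add1n ?even_r ?odd_r //.
  by rewrite binS oddD even_r odd_r.
case: r./2 => [|r']; first by rewrite bin0.
have [_ odd_r'] := odd_bin_double n./2 r'; have [even_r' _] := odd_bin_double n./2 r'.+1.
by rewrite doubleS binS oddD -doubleS even_r' odd_r' addbF.
Qed.

(* C(a + b, a) odd means a and b share no binary digit, and C(a, r), C(b, r)
   odd mean the digits of r occur in both. *)
Lemma odd_bin_disjoint a b r :
  odd 'C(a + b, a) -> odd 'C(a, r) -> odd 'C(b, r) -> r = 0.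
Proof.
elim/ltn_ind: r a b => r IHr a b; rewrite !(odd_bin_half _ r) odd_bin_half oddD.
have [odd_r | even_r] := boolP (odd r).
  move=> /= /andP[carry_ab _] /andP[odd_a _] /andP[odd_b _].
  by rewrite odd_a odd_b in carry_ab.
move=> /= /andP[carry_ab half_ab] half_a half_b.
have no_carry : ~~ (odd a && odd b) by move: carry_ab; case: (odd a); case: (odd b).
rewrite halfD (negbTE no_carry) add0n in half_ab.
have [-> // | r_gt0] := posnP r.
have half_r0 : r./2 = 0.
  by apply: (IHr _ _ _ _ half_ab half_a half_b); rewrite -divn2 ltn_Pdiv.
by rewrite -(odd_double_half r) (negbTE even_r) half_r0.
Qed.

(* The coefficient of X^s in (1 - X^2) G_(2m) is [C(m, s/2) odd] - [C(m, s/2 - 1) odd]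
   for even s; borrow m s marks where it is -1 rather than a parity bit. *)
Definition borrow (m s : nat) : bool :=
  ~~ odd s && ~~ odd 'C(m, s./2) && odd 'C(m, (s./2).-1).

Lemma odd_bin_borrow n m l :
  odd 'C(n + m.+1, m.+1) -> borrow m (n.*2 - l) -> ~~ odd 'C(n.*2, l).
Proof.
rewrite addnC => carry_free /andP[/andP[_ even_cur] odd_prev].
rewrite odd_bin_half odd_double implybF doubleK; apply/negP => /andP[even_l odd_half].
have l_le_n : l./2 <= n by rewrite leqNgt; apply: contraL odd_half => /bin_small ->.
have l_def : l = l./2.*2 by rewrite -{1}(odd_double_half l) (negbTE even_l).
rewrite l_def -doubleB doubleK in even_cur odd_prev.
have odd_bin_n : odd 'C(n, n - l./2) by rewrite bin_sub.
case: (n - l./2) even_cur odd_prev odd_bin_n => [|r]; first by rewrite bin0.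
move=> even_cur odd_prev odd_bin_n; have odd_bin_m : odd 'C(m.+1, r.+1).
  by rewrite binS oddD (negbTE even_cur) odd_prev.
by have := odd_bin_disjoint _ _ _ carry_free odd_bin_m odd_bin_n.
Qed.

Local Open Scope ring_scope.

Lemma natr4_Z4 : 4%:R = 0 :> 'Z_4.
Proof. exact: pchar_Zp. Qed.

Lemma natr_sqr_Z4 x : (x ^ 2)%:R = (odd x)%:R :> 'Z_4.
Proof.
have -> : (x ^ 2 = odd x + 4 * (x./2 * (x./2 + odd x)))%N.
  by rewrite -{1}(odd_double_half x) -mul2n; case: (odd x) => /=; ring.
by rewrite natrD natrM natr4_Z4 mul0r addr0.
Qed.

Lemma natrM2_Z4 x : x%:R *+ 2 = (odd x)%:R *+ 2 :> 'Z_4.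
Proof.
rewrite -{1}(odd_double_half x) natrD mulrnDl -[_ *+ 2 in X in _ + X]mulr_natr -natrM.
have -> : (x./2.*2 * 2 = x./2 * 4)%N by lia.
by rewrite natrM natr4_Z4 mulr0 addr0.
Qed.

Lemma opprM2_Z4 (x : 'Z_4) : (- x) *+ 2 = x *+ 2.
Proof.
by apply/eqP; rewrite mulNrn eq_sym -subr_eq0 opprK -mulrnDr -mulr_natr natr4_Z4 mulr0.
Qed.

Lemma subr_bool_Z4 (u v : bool) :
  u%:R - v%:R = (u (+) v)%:R + (~~ u && v)%:R *+ 2 :> 'Z_4.
Proof. by case: u; case: v; apply/val_inj. Qed.

Lemma intr_Z4_eq2 (z : int) : z%:~R = 2%:R :> 'Z_4 -> (z = 2 %[mod 4])%Z.
Proof.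
have z4_ge0 : (0 <= z %% 4)%Z by apply: modz_ge0.
have z4_lt4 : (z %% 4 < 4)%Z by apply: ltz_pmod.
rewrite {1}(divz_eq z 4) intrD intrM [4%:~R]natr4_Z4 mulr0 add0r.
case: (z %% 4)%Z z4_ge0 z4_lt4 => [[|[|[|[|r]]]]|r] //= _ _ /(congr1 val).
Qed.

Lemma coef_1DXn (R : nzRingType) c r : ((1 + 'X) ^+ c : {poly R})`_r = 'C(c, r)%:R.
Proof.
elim: c r => [|c IHc] r; first by rewrite expr0 coef1 bin0n; case: r.
rewrite exprSr mulrDr mulr1 coefD coefMX IHc.
by case: r => [|r] /=; rewrite ?bin0 ?addr0 // IHc binS natrD addrC.
Qed.

Lemma coef_1BXn (R : nzRingType) c r :
  ((1 - 'X) ^+ c : {poly R})`_r = (-1) ^+ r * 'C(c, r)%:R.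
Proof.
elim: c r => [|c IHc] r.
  by rewrite expr0 coef1 bin0n; case: r => [|r]; rewrite ?mul1r ?mulr0.
rewrite exprSr mulrBr mulr1 coefB coefMX IHc.
case: r => [|r] /=; first by rewrite !bin0 subr0.
by rewrite IHc binS natrD exprS mulN1r mulrDr !mulNr.
Qed.

Definition sqbin (c : nat) : {poly 'Z_4} := \poly_(r < c.+1) ('C(c, r) ^ 2)%:R.

Lemma coef_sqbin c r : (sqbin c)`_r = (odd 'C(c, r))%:R.
Proof.
by rewrite coef_poly -natr_sqr_Z4; case: ltnP => // c_lt_r; rewrite bin_small.
Qed.

Lemma mul2r_sqbin c : 2%:R * sqbin c = 2%:R * (1 + 'X) ^+ c.
Proof.
by apply/polyP => r; rewrite !mulr_natl !coefMn coef_sqbin coef_1DXn [RHS]natrM2_Z4.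
Qed.

Lemma mul2r_1BXn c : 2%:R * (1 - 'X) ^+ c = 2%:R * (1 + 'X) ^+ c :> {poly 'Z_4}.
Proof.
apply/polyP => r; rewrite !mulr_natl !coefMn coef_1BXn coef_1DXn.
by rewrite -signr_odd; case: (odd r); rewrite ?mul1r ?mulN1r ?opprM2_Z4.
Qed.

Definition borrow_poly (m : nat) : {poly 'Z_4} := \poly_(s < m.*2.+3) (borrow m s)%:R.

Lemma coef_borrow_poly m s : (borrow_poly m)`_s = (borrow m s)%:R.
Proof.
rewrite coef_poly; case: ltnP => // s_large; rewrite /borrow.
have [//|even_s] := boolP (odd s); have := odd_double_half s.
by rewrite (negbTE even_s) add0n => s_def; rewrite (@bin_small m (s./2).-1) ?andbF //; lia.
Qed.

Lemma sqbin_double_step m :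
  (1 - 'X^2) * sqbin m.*2 = sqbin m.+1.*2 + 2%:R * borrow_poly m.
Proof.
apply/polyP => s; rewrite mulrBl mul1r coefB coefXnM coefD mulr_natl coefMn.
rewrite coef_borrow_poly !coef_sqbin !(odd_bin_half _.*2) !odd_double !doubleK /borrow.
case: s => [|[|s]]; rewrite /= ?bin0 ?mul0rn ?subr0 ?addr0 // !subSS subn0 negbK.
by case: (odd s) => /=; rewrite ?mul0rn ?subr0 ?addr0 // binS oddD subr_bool_Z4.
Qed.

Lemma sqbin_shift n m :
  (1 - 'X) ^+ (n + 2) * sqbin m.*2 =
  (1 - 'X) ^+ n * sqbin m.+1.*2 + 2%:R * ('X * (1 + 'X) ^+ (n + m.*2).+1)
  + 2%:R * ((1 - 'X) ^+ n * borrow_poly m).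
Proof.
have expand : (1 - 'X) ^+ (n + 2) =
    (1 - 'X) ^+ n * (1 - 'X^2) - 2%:R * 'X * (1 - 'X) ^+ n.+1 :> {poly 'Z_4}.
  by rewrite exprD [_ ^+ n.+1]exprSr; ring.
have neg2 : - 2%:R = 2%:R :> {poly 'Z_4}.
  by apply/eqP; rewrite -subr_eq0 -opprD -natrD -polyC_natr natr4_Z4 polyC0 oppr0.
have mod2 : - (2%:R * ((1 - 'X) ^+ n.+1 * sqbin m.*2)) =
    2%:R * (1 + 'X) ^+ (n + m.*2).+1.
  by rewrite -mulNr neg2 mulrCA mul2r_sqbin mulrCA mulrA mul2r_1BXn -mulrA -exprD addSn.
rewrite expand; transitivity ((1 - 'X) ^+ n * ((1 - 'X^2) * sqbin m.*2) +
  'X * - (2%:R * ((1 - 'X) ^+ n.+1 * sqbin m.*2))); first ring.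
by rewrite sqbin_double_step mod2; ring.
Qed.

Lemma borrow_term_vanishes n m :
  odd 'C(n + m.+1, m.+1) -> ((1 - 'X) ^+ n.*2 * borrow_poly m)`_n.*2 *+ 2 = 0.
Proof.
move=> carry_free; rewrite coefM -sumrMnl; apply: big1 => l _.
rewrite coef_1BXn coef_borrow_poly.
case borrow_l: (borrow m (n.*2 - l)); last by rewrite mulr0 mul0rn.
have := odd_bin_borrow _ _ _ carry_free borrow_l.
by rewrite mulr1 -mulrnAr natrM2_Z4 => /negbTE ->; rewrite mul0rn mulr0.
Qed.

Lemma zbinom_sub c m l : (l <= m)%N -> zbinom c (c%:Z - m%:Z + l%:Z) = 'C(c, m - l)%:Z.
Proof.
move=> l_le_m; case def_b: (c%:Z - m%:Z + l%:Z) => [b|b] /=.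
  have [-> le_ml_c] : b = (c - (m - l))%N /\ (m - l <= c)%N by lia.
  by rewrite bin_sub.
by rewrite bin_small //; lia.
Qed.

Lemma lam_coef k i j : (j <= k)%N -> (i <= k)%N ->
  (lam k i j)%:~R = ((1 - 'X) ^+ j * sqbin (k - j))`_(k - i) :> 'Z_4.
Proof.
move=> j_le_k i_le_k; rewrite /lam big_mkord coefM rmorph_sum.
apply: eq_bigr => -[l /= l_le] _.
have -> : i%:Z - j%:Z = (k - j)%:Z - (k - i)%:Z by lia.
rewrite zbinom_sub -1?ltnS // coef_1BXn coef_sqbin -natr_sqr_Z4.
by rewrite !rmorphM rmorphXn rmorphN1.
Qed.

Lemma coef_sqbin_shift n m : odd 'C(n.+1 + m.+1, m.+1) ->
  ((1 - 'X) ^+ (n.+1.*2 + 2) * sqbin m.*2)`_n.+1.*2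
    - ((1 - 'X) ^+ n.+1.*2 * sqbin m.+1.*2)`_n.+1.*2
  = 'C((n.+1 + m.+1).*2.-1, m.+1.*2)%:R *+ 2.
Proof.
move=> carry_free; rewrite sqbin_shift !coefD !mulr_natl !coefMn.
rewrite borrow_term_vanishes // addr0 addrAC subrr add0r coefXM coef_1DXn /=.
have -> : (n.+1.*2 + m.*2).+1 = (n.+1 + m.+1).*2.-1 by lia.
have -> : n.*2.+1 = ((n.+1 + m.+1).*2.-1 - m.+1.*2)%N by lia.
by rewrite bin_sub //; lia.
Qed.

Theorem mainTheorem12 (k i : nat) :
  (2 <= k)%N -> ~~ odd k -> (1 <= i)%N -> (i <= k - 1)%N ->
  odd 'C(k, i) -> odd 'C(k - 1, i) ->
  ((lam k i (k - i + 2) - lam k i (k - i)) = 2 %[mod 4])%Z.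
Proof.
move=> _ even_k i_gt0 i_lt_k + odd_bin_k1.
rewrite odd_bin_half (negbTE even_k) implybF => /andP[even_i].
have [m i_def] : exists m, i = m.+1.*2.
  by exists i./2.-1; rewrite -[LHS](odd_double_half i) (negbTE even_i); lia.
have [n k_def] : exists n, k = (n.+1 + m.+1).*2.
  by exists ((k - i)./2.-1); rewrite -[LHS](odd_double_half k) (negbTE even_k); lia.
subst k i; rewrite !doubleK => carry_free.
apply: intr_Z4_eq2; rewrite rmorphB /= !lam_coef; try lia.
have -> : ((n.+1 + m.+1).*2 - m.+1.*2 = n.+1.*2)%N by lia.
have -> : ((n.+1 + m.+1).*2 - (n.+1.*2 + 2) = m.*2)%N by lia.
have -> : ((n.+1 + m.+1).*2 - n.+1.*2 = m.+1.*2)%N by lia.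
by rewrite coef_sqbin_shift // natrM2_Z4 -subn1 odd_bin_k1.
Qed.
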